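(* Let $F$, $X_0$, $B$, $C$ be as in the context. Suppose that for every $X_1\in\mathbb{R}^m$ with $X_1\neq 0$ and $CX_1=0$ there is no $X_2\in\mathbb{R}^m$ with $CX_2=-B(X_1,X_1)$ (i.e. no approximate solution of degree 1, $X_0+tX_1$ with $X_1\ne0$, extends to an approximate solution $X_0+tX_1+t^2X_2$ of degree 2). Then $F(X)=0$ has no nonconstant analytic family of solutions with initial term $X_0$.
   Context: Let $m,n\ge 1$ and let $F=(F_1,\dots,F_n):\mathbb{R}^m\to\mathbb{R}^n$, where each component is a polynomial of degree at most 2 written as $F_k(X)=\sum_{i=1}^m\sum_{j=1}^m\alpha^k_{ij}x_ix_j+\sum_{i=1}^m\beta^k_ix_i+\gamma^k$ for $X=(x_1,\dots,x_m)$, with real coefficients and $\alpha^k_{ij}=\alpha^k_{ji}$. Fix $X_0\in\mathbb{R}^m$ with $F(X_0)=0$. Define the bilinear map $B:\mathbb{R}^m\times\mathbb{R}^m\to\mathbb{R}^n$ by $B(X,Y)_k=\sum_{i,j=1}^m\alpha^k_{ij}x_iy_j$, the linear map $A:\mathbb{R}^m\to\mathbb{R}^n$ by $(AX)_k=\sum_{i=1}^m\beta^k_ix_i$, and the linear map $C:\mathbb{R}^m\to\mathbb{R}^n$ by $CX=B(X_0,X)+B(X,X_0)+AX$. An analytic family of solutions with initial term $X_0$ is a power series $X(t)=\sum_{p=0}^\infty X_pt^p$ with $X_p\in\mathbb{R}^m$, positive radius of convergence, constant term equal to $X_0$, and $F(X(t))=0$ for all sufficiently small $t$; it is nonconstant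 if $X_p\neq 0$ for some $p\ge 1$. *)

From Stdlib Require Import Reals Lra Lia.
From Coquelicot Require Import Coquelicot.
Open Scope R_scope.

(* Vectors of R^m are represented as functions nat -> R; only the
   components 0 <= i < m are meaningful. *)

Fixpoint sumR (m : nat) (f : nat -> R) : R :=
  match m with
  | O => 0
  | S m' => sumR m' f + f m'
  end.

Definition Fmap (m : nat) (alpha : nat -> nat -> nat -> R) (beta : nat -> nat -> R)
  (gamma : nat -> R) (X : nat -> R) (k : nat) : R :=
  sumR m (fun i => sumR m (fun j => alpha k i j * X i * X j))
  + sumR m (fun i => beta k i * X i) + gamma k.

Definition Bmap (m : nat) (alpha : nat -> nat -> nat -> R) (X Y : nat -> R) (k : nat) : R :=
  sumR m (fun i => sumR m (fun j => alpha k i j * X i * Y j)).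

Definition Amap (m : nat) (beta : nat -> nat -> R) (X : nat -> R) (k : nat) : R :=
  sumR m (fun i => beta k i * X i).

Definition Cmap (m : nat) (alpha : nat -> nat -> nat -> R) (beta : nat -> nat -> R)
  (X0 X : nat -> R) (k : nat) : R :=
  Bmap m alpha X0 X k + Bmap m alpha X X0 k + Amap m beta X k.

(* Xs p i = i-th component of the coefficient X_p.  The family is
   X(t) = sum_p X_p t^p, evaluated componentwise. *)
Definition eval_family (Xs : nat -> nat -> R) (t : R) : nat -> R :=
  fun i => PSeries (fun p => Xs p i) t.

Definition analytic_family (m n : nat) (alpha : nat -> nat -> nat -> R)
  (beta : nat -> nat -> R) (gamma : nat -> R) (X0 : nat -> R)
  (Xs : nat -> nat -> R) : Prop :=
  (forall i, (i < m)%nat -> Rbar_lt 0 (CV_radius (fun p => Xs p i))) /\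
  (forall i, (i < m)%nat -> Xs O i = X0 i) /\
  (exists delta, 0 < delta /\
     forall t, Rabs t < delta ->
       forall k, (k < n)%nat -> Fmap m alpha beta gamma (eval_family Xs t) k = 0).

Definition nonconstant (m : nat) (Xs : nat -> nat -> R) : Prop :=
  exists p i, (1 <= p)%nat /\ (i < m)%nat /\ Xs p i <> 0.

From Stdlib Require Import Reals Lra Lia Classical Wf_nat FunctionalExtensionality.
From Coquelicot Require Import Coquelicot.
Open Scope R_scope.

(* Let X_r be the first nonzero coefficient of a nonconstant family.  Then
   X(t) = X0 + t^r Y(t) with Y analytic and Y(0) = X_r, and since F(X0) = 0,
   F(X(t)) = t^r C Y(t) + t^(2r) B(Y(t), Y(t)).  Dividing by t^r, the power
   series C Y(t) = sum_p C X_(r+p) t^p equals -t^r B(Y(t), Y(t)); comparing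
   the coefficients of t^0 and t^r gives C X_r = 0 and C X_(2r) = -B(X_r, X_r),
   so X_r is a nonzero degree-1 solution extending to degree 2. *)

Lemma sumR_ext m f g : (forall i, (i < m)%nat -> f i = g i) -> sumR m f = sumR m g.
Proof.
  induction m as [|m IH]; simpl; intros Hfg; [reflexivity|].
  rewrite IH by (intros; apply Hfg; lia). rewrite Hfg by lia. reflexivity.
Qed.

Lemma sumR_plus m f g : sumR m (fun i => f i + g i) = sumR m f + sumR m g.
Proof. induction m as [|m IH]; simpl; [ring|]. rewrite IH; ring. Qed.

Lemma sumR_mult_l m c f : sumR m (fun i => c * f i) = c * sumR m f.
Proof. induction m as [|m IH]; simpl; [ring|]. rewrite IH; ring. Qed.

Lemma sumR_swap m n (f : nat -> nat -> R) :
  sumR m (fun i => sumR n (fun j => f i j)) = sumR n (fun j => sumR m (fun i => f i j)).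
Proof.
  induction m as [|m IH]; simpl.
  - induction n as [|n IHn]; simpl; [reflexivity|]. rewrite <- IHn; ring.
  - rewrite IH, <- sumR_plus. reflexivity.
Qed.

Lemma continuity_pt_sumR m (g : nat -> R -> R) x :
  (forall i, (i < m)%nat -> continuity_pt (g i) x) ->
  continuity_pt (fun t => sumR m (fun i => g i t)) x.
Proof.
  induction m as [|m IH]; simpl; intros Hg.
  - apply continuity_pt_const. intros ? ?; reflexivity.
  - apply (continuity_pt_plus (fun t => sumR m (fun i => g i t)) (g m)).
    + apply IH; intros; apply Hg; lia.
    + apply Hg; lia.
Qed.

Definition Cmat m (alpha : nat -> nat -> nat -> R) beta X0 k j :=
  sumR m (fun i => alpha k i j * X0 i) + sumR m (fun i => alpha k j i * X0 i) + beta k j.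

Lemma Cmap_Cmat m alpha beta X0 Y k :
  Cmap m alpha beta X0 Y k = sumR m (fun j => Cmat m alpha beta X0 k j * Y j).
Proof.
  unfold Cmap, Bmap, Amap, Cmat.
  rewrite (sumR_swap m m (fun i j => alpha k i j * X0 i * Y j)).
  rewrite <- !sumR_plus. apply sumR_ext; intros j _.
  rewrite !Rmult_plus_distr_r, !(Rmult_comm _ (Y j)), <- !sumR_mult_l.
  rewrite (sumR_ext m (fun i => alpha k i j * X0 i * Y j) (fun i => Y j * (alpha k i j * X0 i)))
    by (intros; ring).
  rewrite (sumR_ext m (fun i => alpha k j i * Y j * X0 i) (fun i => Y j * (alpha k j i * X0 i)))
    by (intros; ring).
  ring.
Qed.

Lemma Cmap_scal m alpha beta X0 c Y k :
  Cmap m alpha beta X0 (fun i => c * Y i) k = c * Cmap m alpha beta X0 Y k.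
Proof. rewrite !Cmap_Cmat, <- sumR_mult_l. apply sumR_ext; intros; ring. Qed.

Lemma Bmap_scal m alpha c Y k :
  Bmap m alpha (fun i => c * Y i) (fun i => c * Y i) k = c ^ 2 * Bmap m alpha Y Y k.
Proof.
  unfold Bmap. rewrite <- sumR_mult_l. apply sumR_ext; intros.
  rewrite <- sumR_mult_l. apply sumR_ext; intros. ring.
Qed.

Lemma Fmap_add m alpha beta gamma X0 D k :
  Fmap m alpha beta gamma (fun i => X0 i + D i) k =
  Fmap m alpha beta gamma X0 k + Cmap m alpha beta X0 D k + Bmap m alpha D D k.
Proof.
  unfold Fmap, Cmap, Bmap, Amap.
  rewrite (sumR_ext m (fun i => beta k i * (X0 i + D i))
                      (fun i => beta k i * X0 i + beta k i * D i)) by (intros; ring).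
  rewrite sumR_plus.
  rewrite (sumR_ext m (fun i => sumR m (fun j => alpha k i j * (X0 i + D i) * (X0 j + D j)))
    (fun i => sumR m (fun j => alpha k i j * X0 i * X0 j)
      + sumR m (fun j => alpha k i j * X0 i * D j)
      + sumR m (fun j => alpha k i j * D i * X0 j) + sumR m (fun j => alpha k i j * D i * D j))).
  - rewrite !sumR_plus. ring.
  - intros i _. rewrite <- !sumR_plus. apply sumR_ext; intros; ring.
Qed.

Lemma Fmap_ext m alpha beta gamma X X' k :
  (forall i, (i < m)%nat -> X i = X' i) ->
  Fmap m alpha beta gamma X k = Fmap m alpha beta gamma X' k.
Proof.
  intros HX. unfold Fmap. do 2 f_equal.
  - apply sumR_ext; intros i Hi. apply sumR_ext; intros j Hj.
    rewrite !HX by assumption. reflexivity.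
  - apply sumR_ext; intros i Hi. rewrite HX by assumption. reflexivity.
Qed.

Lemma Bmap_continuity_pt m alpha (Y : nat -> R -> R) k x :
  (forall j, (j < m)%nat -> continuity_pt (Y j) x) ->
  continuity_pt (fun t => Bmap m alpha (fun j => Y j t) (fun j => Y j t) k) x.
Proof.
  intros HY. unfold Bmap. apply continuity_pt_sumR; intros i Hi.
  apply continuity_pt_sumR; intros j Hj.
  apply (continuity_pt_mult (fun t => alpha k i j * Y i t) (Y j)); [|now apply HY].
  apply (continuity_pt_mult (fun _ => alpha k i j) (Y i)); [|now apply HY].
  apply continuity_pt_const. intros ? ?; reflexivity.
Qed.

Lemma CV_radius_decr_n (a : nat -> R) n : CV_radius (PS_decr_n a n) = CV_radius a.
Proof.
  induction n as [|n IH].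
  - apply CV_radius_ext. reflexivity.
  - rewrite <- IH, <- (CV_radius_decr_1 (PS_decr_n a n)).
    apply CV_radius_ext. intros k. unfold PS_decr_n, PS_decr_1. f_equal. lia.
Qed.

Lemma CV_radius_sumR m (L : nat -> R) (a : nat -> nat -> R) (rho : R) : 0 <= rho ->
  (forall j, (j < m)%nat -> Rbar_le rho (CV_radius (a j))) ->
  Rbar_le rho (CV_radius (fun p => sumR m (fun j => L j * a j p))).
Proof.
  intros Hrho. induction m as [|m IH]; simpl sumR; intros Ha.
  - rewrite CV_radius_const_0. exact I.
  - rewrite (CV_radius_ext _
      (PS_plus (fun p => sumR m (fun j => L j * a j p)) (PS_scal (L m) (a m)))) by reflexivity.
    eapply Rbar_le_trans; [|apply CV_radius_plus].
    assert (Hlast : Rbar_le rho (CV_radius (PS_scal (L m) (a m)))).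
    { destruct (Req_dec (L m) 0) as [HL|HL].
      - rewrite (CV_radius_ext _ (fun _ => 0)), CV_radius_const_0; [exact I|].
        intros p. unfold PS_scal. rewrite HL. apply (scal_zero_l (a m p)).
      - rewrite CV_radius_scal by exact HL. apply Ha; lia. }
    assert (Hinit : Rbar_le rho (CV_radius (fun p => sumR m (fun j => L j * a j p))))
      by (apply IH; intros; apply Ha; lia).
    destruct (CV_radius (fun p => sumR m (fun j => L j * a j p))),
             (CV_radius (PS_scal (L m) (a m))); simpl in *; try apply Rmin_glb; auto.
Qed.

Lemma PSeries_sumR m (L : nat -> R) (a : nat -> nat -> R) t :
  (forall j, (j < m)%nat -> ex_pseries (a j) t) ->
  ex_pseries (fun p => sumR m (fun j => L j * a j p)) t /\
  PSeries (fun p => sumR m (fun j => L j * a j p)) t = sumR m (fun j => L j * PSeries (a j) t).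
Proof.
  induction m as [|m IH]; simpl sumR; intros Ha.
  - split; [|apply PSeries_const_0].
    apply CV_radius_inside. rewrite CV_radius_const_0. exact I.
  - destruct IH as [Hex Hsum]; [intros; apply Ha; lia|].
    assert (Hlast : ex_pseries (PS_scal (L m) (a m)) t)
      by (apply ex_pseries_scal; [apply Rmult_comm | apply Ha; lia]).
    rewrite (PSeries_ext _ (PS_plus (fun p => sumR m (fun j => L j * a j p)) (PS_scal (L m) (a m))))
      by reflexivity.
    split.
    + apply (ex_pseries_ext
        (PS_plus (fun p => sumR m (fun j => L j * a j p)) (PS_scal (L m) (a m))));
        [reflexivity | now apply ex_pseries_plus].
    + rewrite PSeries_plus, Hsum, PSeries_scal by assumption. reflexivity.
Qed.

Lemma PSeries_Cmap m alpha beta X0 (a : nat -> nat -> R) rho k :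
  0 <= rho -> (forall j, (j < m)%nat -> Rbar_le rho (CV_radius (a j))) ->
  Rbar_le rho (CV_radius (fun p => Cmap m alpha beta X0 (fun j => a j p) k)) /\
  forall t, Rabs t < rho ->
    Cmap m alpha beta X0 (fun j => PSeries (a j) t) k
    = PSeries (fun p => Cmap m alpha beta X0 (fun j => a j p) k) t.
Proof.
  intros Hrho Ha.
  replace (fun p => Cmap m alpha beta X0 (fun j => a j p) k)
    with (fun p => sumR m (fun j => Cmat m alpha beta X0 k j * a j p))
    by (extensionality p; symmetry; apply Cmap_Cmat).
  split.
  - now apply CV_radius_sumR.
  - intros t Ht. rewrite Cmap_Cmat. symmetry. apply PSeries_sumR. intros j Hj.
    apply CV_radius_inside. eapply Rbar_lt_le_trans; [|apply Ha; exact Hj]. exact Ht.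
Qed.

Lemma continuity_pt_eq_punctured (g h : R -> R) d :
  0 < d -> continuity_pt g 0 -> continuity_pt h 0 ->
  (forall t, 0 < Rabs t < d -> g t = h t) -> g 0 = h 0.
Proof.
  intros Hd Hg Hh Hgh.
  assert (Hloc : Rbar_locally' 0 (fun t => g t = h t)).
  { exists (mkposreal d Hd). intros t Ht Ht0. apply Hgh. split.
    - now apply Rabs_pos_lt.
    - change (Rabs (t - 0) < d) in Ht. now rewrite Rminus_0_r in Ht. }
  apply is_lim_continuity in Hg, Hh.
  apply (is_lim_ext_loc _ _ _ _ Hloc), is_lim_unique in Hg.
  apply is_lim_unique in Hh. rewrite Hh in Hg. now injection Hg.
Qed.

Lemma PSeries_eq_pow_mul_coef r : forall (a : nat -> R) h d,
  Rbar_lt 0 (CV_radius a) -> 0 < d -> continuity_pt h 0 ->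
  (forall t, 0 < Rabs t < d -> PSeries a t = t ^ r * h t) ->
  (forall p, (p < r)%nat -> a p = 0) /\ a r = h 0.
Proof.
  assert (Hcont0 : forall a, Rbar_lt 0 (CV_radius a) -> continuity_pt (PSeries a) 0)
    by (intros a Ha; apply PSeries_continuity; now rewrite Rabs_R0).
  induction r as [|r IH]; intros a h d Ha Hd Hh Hah.
  - split; [intros; lia|].
    rewrite <- PSeries_0. apply (continuity_pt_eq_punctured _ _ d); auto.
    intros t Ht. rewrite Hah by exact Ht. ring.
  - assert (Ha0 : a 0%nat = 0).
    { rewrite <- PSeries_0. replace 0 with (0 ^ S r * h 0) at 2 by (simpl; ring).
      apply (continuity_pt_eq_punctured _ (fun t => t ^ S r * h t) d); auto.
      apply (continuity_pt_mult (fun t => t ^ S r) h); [|exact Hh].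
      apply derivable_continuous_pt, derivable_pt_pow. }
    destruct (IH (PS_decr_1 a) h d) as [Hlow Hr]; auto.
    + now rewrite CV_radius_decr_1.
    + intros t Ht. assert (Ht0 : t <> 0) by (intros ->; rewrite Rabs_R0 in Ht; lra).
      apply Rmult_eq_reg_l with t; [|exact Ht0].
      rewrite <- PSeries_decr_1_aux by exact Ha0. rewrite Hah by exact Ht. simpl; ring.
    + split; [|exact Hr]. intros [|p] Hp; [exact Ha0|]. apply Hlow. lia.
Qed.

Lemma PSeries_shift (a : nat -> R) r t :
  (1 <= r)%nat -> (forall p, (1 <= p < r)%nat -> a p = 0) ->
  Rbar_lt (Rabs t) (CV_radius a) ->
  PSeries a t = a 0%nat + t ^ r * PSeries (PS_decr_n a r) t.
Proof.
  intros Hr Hlow Ht. destruct r as [|r]; [lia|].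
  rewrite PSeries_decr_1 by now apply CV_radius_inside.
  rewrite (PSeries_decr_n_aux _ r)
    by (intros k Hk; apply Hlow; lia).
  simpl. rewrite Rmult_assoc. reflexivity.
Qed.

Lemma CV_radius_uniform_lower_bound m (a : nat -> nat -> R) :
  (forall i, (i < m)%nat -> Rbar_lt 0 (CV_radius (a i))) ->
  exists rho, 0 < rho /\ forall i, (i < m)%nat -> Rbar_le rho (CV_radius (a i)).
Proof.
  induction m as [|m IH]; intros Ha.
  - exists 1. split; [lra | intros; lia].
  - destruct IH as [rho1 [Hrho1 H1]]; [intros; apply Ha; lia|].
    assert (Hlast : exists rho2, 0 < rho2 /\ Rbar_le rho2 (CV_radius (a m))).
    { specialize (Ha m (Nat.lt_succ_diag_r m)).
      destruct (CV_radius (a m)) as [x| |]; simpl in Ha; [| |contradiction].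
      - exists x. split; [exact Ha | apply Rle_refl].
      - exists 1. split; [lra | exact I]. }
    destruct Hlast as [rho2 [Hrho2 H2]].
    exists (Rmin rho1 rho2). split; [now apply Rmin_glb_lt|].
    intros i Hi. destruct (Nat.eq_dec i m) as [->|Him].
    + eapply Rbar_le_trans; [|exact H2]. apply Rmin_r.
    + eapply Rbar_le_trans; [|apply H1; lia]. apply Rmin_l.
Qed.

Lemma nonconstant_least_order m (Xs : nat -> nat -> R) :
  nonconstant m Xs ->
  exists r, (1 <= r)%nat /\ (exists i, (i < m)%nat /\ Xs r i <> 0) /\
    forall p i, (1 <= p < r)%nat -> (i < m)%nat -> Xs p i = 0.
Proof.
  intros [p [i [Hp [Hi Hpi]]]].
  set (P := fun q => (1 <= q)%nat /\ exists i, (i < m)%nat /\ Xs q i <> 0).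
  destruct (dec_inh_nat_subset_has_unique_least_element P) as [r [[[Hr Hri] Hleast] _]].
  - intros q. apply classic.
  - exists p. split; [exact Hp|]. exists i. split; assumption.
  - exists r. split; [exact Hr|]. split; [exact Hri|].
    intros q j Hq Hj. apply NNPP. intros Hqj.
    assert (Hrq : (r <= q)%nat) by (apply Hleast; split; [lia|]; exists j; split; assumption).
    lia.
Qed.

Section LeadingOrder.

Variables (m n : nat) (alpha : nat -> nat -> nat -> R) (beta : nat -> nat -> R)
  (gamma : nat -> R) (X0 : nat -> R) (Xs : nat -> nat -> R) (r : nat) (rho delta : R).

Hypothesis HF0 : forall k, (k < n)%nat -> Fmap m alpha beta gamma X0 k = 0.
Hypothesis Hr : (1 <= r)%nat.
Hypothesis Hconst : forall i, (i < m)%nat -> Xs 0%nat i = X0 i.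
Hypothesis Hlow : forall p i, (1 <= p < r)%nat -> (i < m)%nat -> Xs p i = 0.
Hypothesis Hrho : 0 < rho.
Hypothesis Hrad : forall i, (i < m)%nat -> Rbar_le rho (CV_radius (fun p => Xs p i)).
Hypothesis Hdelta : 0 < delta.
Hypothesis Hsol : forall t, Rabs t < delta ->
  forall k, (k < n)%nat -> Fmap m alpha beta gamma (eval_family Xs t) k = 0.

Let tail j := PS_decr_n (fun p => Xs p j) r.
Let Y t j := PSeries (tail j) t.

Lemma CV_radius_tail j : (j < m)%nat -> Rbar_le rho (CV_radius (tail j)).
Proof. intros Hj. unfold tail. rewrite CV_radius_decr_n. now apply Hrad. Qed.

Lemma eval_family_expansion t j : Rabs t < rho -> (j < m)%nat ->
  eval_family Xs t j = X0 j + t ^ r * Y t j.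
Proof.
  intros Ht Hj. unfold eval_family, Y, tail. rewrite <- Hconst by exact Hj.
  apply PSeries_shift; [exact Hr | intros; now apply Hlow |].
  eapply Rbar_lt_le_trans; [|now apply Hrad]. exact Ht.
Qed.

Lemma Cmap_tail_series k t : (k < n)%nat -> 0 < Rabs t < Rmin rho delta ->
  PSeries (fun p => Cmap m alpha beta X0 (fun j => tail j p) k) t
  = t ^ r * - Bmap m alpha (Y t) (Y t) k.
Proof.
  intros Hk [Ht0 Ht].
  assert (Htr : Rabs t < rho) by (eapply Rlt_le_trans; [exact Ht | apply Rmin_l]).
  assert (Htd : Rabs t < delta) by (eapply Rlt_le_trans; [exact Ht | apply Rmin_r]).
  assert (Htr0 : t ^ r <> 0)
    by (apply pow_nonzero; intros Ht00; rewrite Ht00, Rabs_R0 in Ht0; lra).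
  destruct (PSeries_Cmap m alpha beta X0 tail rho k) as [_ HC];
    [lra | exact CV_radius_tail |].
  rewrite <- HC by exact Htr. fold (Y t).
  specialize (Hsol t Htd k Hk).
  rewrite (Fmap_ext _ _ _ _ _ (fun j => X0 j + t ^ r * Y t j)) in Hsol
    by (intros; now apply eval_family_expansion).
  rewrite Fmap_add, HF0, Cmap_scal, Bmap_scal in Hsol by exact Hk.
  apply Rmult_eq_reg_l with (t ^ r); [|exact Htr0].
  replace ((t ^ r) ^ 2) with (t ^ r * t ^ r) in Hsol by ring.
  lra.
Qed.

Lemma leading_order_equations k : (k < n)%nat ->
  Cmap m alpha beta X0 (Xs r) k = 0 /\
  Cmap m alpha beta X0 (Xs (r + r)%nat) k = - Bmap m alpha (Xs r) (Xs r) k.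
Proof.
  intros Hk.
  assert (HY0 : Y 0 = Xs r).
  { extensionality j. unfold Y, tail. rewrite PSeries_0.
    unfold PS_decr_n. now rewrite Nat.add_0_r. }
  destruct (PSeries_Cmap m alpha beta X0 tail rho k) as [Hcrad _];
    [lra | exact CV_radius_tail |].
  destruct (PSeries_eq_pow_mul_coef r (fun p => Cmap m alpha beta X0 (fun j => tail j p) k)
              (fun t => - Bmap m alpha (Y t) (Y t) k) (Rmin rho delta))
    as [Hvanish Hlead].
  - eapply Rbar_lt_le_trans; [|exact Hcrad]. exact Hrho.
  - now apply Rmin_glb_lt.
  - apply (continuity_pt_opp (fun t => Bmap m alpha (Y t) (Y t) k)).
    apply (Bmap_continuity_pt m alpha (fun j t => Y t j)). intros j Hj.
    apply PSeries_continuity. rewrite Rabs_R0.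
    eapply Rbar_lt_le_trans; [|now apply CV_radius_tail]. exact Hrho.
  - intros t Ht. now apply Cmap_tail_series.
  - split.
    + rewrite <- (Hvanish 0%nat Hr). unfold tail, PS_decr_n. now rewrite Nat.add_0_r.
    + rewrite <- HY0. exact Hlead.
Qed.

End LeadingOrder.

Theorem theorem3 (m n : nat) (alpha : nat -> nat -> nat -> R)
  (beta : nat -> nat -> R) (gamma : nat -> R) (X0 : nat -> R) :
  (1 <= m)%nat -> (1 <= n)%nat ->
  (forall k i j, (k < n)%nat -> (i < m)%nat -> (j < m)%nat ->
     alpha k i j = alpha k j i) ->
  (forall k, (k < n)%nat -> Fmap m alpha beta gamma X0 k = 0) ->
  (forall X1 : nat -> R,
     (exists i, (i < m)%nat /\ X1 i <> 0) ->
     (forall k, (k < n)%nat -> Cmap m alpha beta X0 X1 k = 0) ->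
     ~ (exists X2 : nat -> R,
          forall k, (k < n)%nat ->
            Cmap m alpha beta X0 X2 k = - Bmap m alpha X1 X1 k)) ->
  ~ (exists Xs : nat -> nat -> R,
       analytic_family m n alpha beta gamma X0 Xs /\ nonconstant m Xs).
Proof.
  intros _ _ _ HF0 Hno [Xs [[Hrad [Hconst [delta [Hdelta Hsol]]]] Hnc]].
  destruct (nonconstant_least_order m Xs Hnc) as [r [Hr [Hnz Hlow]]].
  destruct (CV_radius_uniform_lower_bound m (fun i p => Xs p i) Hrad) as [rho [Hrho Hrhoi]].
  pose proof (leading_order_equations m n alpha beta gamma X0 Xs r rho delta
                HF0 Hr Hconst Hlow Hrho Hrhoi Hdelta Hsol) as Hlead.
  apply (Hno (Xs r) Hnz).
  - intros k Hk. apply (Hlead k Hk).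
  - exists (Xs (r + r)%nat). intros k Hk. apply (Hlead k Hk).
Qed.
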